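(* For each $t\in\{0,1,\dots,T-1\}$ and $i\in\{1,\dots,N\}$: (i) for every $a\in\mathbb{Z}$, $\Delta G^{N,i}_t(a,k)=G^{N,i}_t(a+1,k)-G^{N,i}_t(a,k)$ is non-increasing in $k\in\mathbb{N}_0$; and (ii) for every $x\in\mathbb{Z}$, $\Delta\tilde V^{N,i}_t(x,k)=\tilde V^{N,i}_t(x+1,k)-\tilde V^{N,i}_t(x,k)$ is non-increasing in $k\in\mathbb{N}_0$.
   Context: Spare parts setting. Fix integers $N\ge1$, $T\ge1$, reals $\alpha_0,\beta_0>0$, and for each $i\in\{1,\dots,N\}$ unit costs $c_v^i,c_h^i,c_b^i>0$ (transportation, holding, backorder) with $c_b^i>c_v^i$. $\mathbb{N}_0=\{0,1,2,\dots\}$, $y^+=\max(y,0)$. For real $r>0$ and $p\in(0,1)$, $NB(r,p)$ is the distribution on $\mathbb{N}_0$ with $P(n)=\frac{\Gamma(n+r)}{\Gamma(r)n!}p^r(1-p)^n$; $NB(0,p)$ is the point mass at $0$. For $t\in\{0,\dots,T\}$ let $p_t=\frac{\beta_0+Nt}{\beta_0+Nt+1}$. At epoch $t$ and statistic $k$ let $Z\sim NB(\alpha_0+k,p_t)$, $K\sim NB((N-1)(\alpha_0+k),p_t)$ independent, and $C_i(a,x,k)=c_v^i(a-x)+c_h^i\mathbb{E}[(a-Z)^+]+c_b^i\mathbb{E}[(Z-a)^+]$. Define $\tilde V^{N,i}_T\equiv0$ and for $t=T-1,\dots,0$, $(x,k)\in\mathbb{Z}\times\mathbb{N}_0$: $\tilde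 V^{N,i}_t(x,k)=\min_{a\in\mathbb{Z},a\ge x}\{C_i(a,x,k)+\mathbb{E}[\tilde V^{N,i}_{t+1}(a-Z,k+Z+K)]\}$. For $t\in\{0,\dots,T-1\}$ let $G^{N,i}_t(a,k)=c_v^ia+c_h^i\mathbb{E}[(a-Z)^+]+c_b^i\mathbb{E}[(Z-a)^+]+\mathbb{E}[\tilde V^{N,i}_{t+1}(a-Z,k+Z+K)]$, so that $\tilde V^{N,i}_t(x,k)=\min_{a\ge x}\{G^{N,i}_t(a,k)-c_v^ix\}$. *)

From Stdlib Require Import Reals ZArith.
From Coquelicot Require Import Coquelicot.
Open Scope R_scope.

(* rising factorial r (r+1) ... (r+n-1) = Gamma(n+r)/Gamma(r) for r > 0 *)
Fixpoint rising (r : R) (n : nat) : R :=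
  match n with O => 1 | S m => rising r m * (r + INR m) end.

(* NB(r,p) pmf; for r = 0 this is the point mass at 0 (rising 0 n = 0 for n>=1,
   Rpower p 0 = 1). *)
Definition nb_pmf (r p : R) (n : nat) : R :=
  rising r n / INR (fact n) * Rpower p r * (1 - p) ^ n.

Definition E_nb (r p : R) (f : nat -> R) : R :=
  Series (fun n => nb_pmf r p n * f n).

(* expectation of g(Z,K), Z ~ NB(r1,p), K ~ NB(r2,p) independent *)
Definition E_nb2 (r1 r2 p : R) (g : nat -> nat -> R) : R :=
  Series (fun n => nb_pmf r1 p n *
     Series (fun m => nb_pmf r2 p m * g n m)).

Definition pos (y : R) : R := Rmax y 0.

(* infimum of F over the integers a >= x (the min in the paper) *)
Definition inf_ge (x : Z) (F : Z -> R) : R :=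
  real (Glb_Rbar (fun y => exists a : Z, (x <= a)%Z /\ y = F a)).

Section Model.
Variables (N T : nat) (alpha0 beta0 : R) (cv ch cb : nat -> R).

Definition p_t (t : nat) : R :=
  (beta0 + INR N * INR t) / (beta0 + INR N * INR t + 1).

Definition rZ (k : nat) : R := alpha0 + INR k.
Definition rK (k : nat) : R := (INR N - 1) * (alpha0 + INR k).

Definition Ccost (i t : nat) (a x : Z) (k : nat) : R :=
  cv i * IZR (a - x) + ch i * E_nb (rZ k) (p_t t) (fun n => pos (IZR a - INR n))
  + cb i * E_nb (rZ k) (p_t t) (fun n => pos (INR n - IZR a)).

(* Vaux i m t = tilde V^{N,i}_t when m = T - t steps remain *)
Fixpoint Vaux (i m t : nat) (x : Z) (k : nat) : R :=
  match m with
  | O => 0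
  | S m' => inf_ge x (fun a =>
      Ccost i t a x k +
      E_nb2 (rZ k) (rK k) (p_t t)
        (fun n l => Vaux i m' (S t) (a - Z.of_nat n)%Z (k + n + l)%nat))
  end.

Definition Vt (i t : nat) (x : Z) (k : nat) : R := Vaux i (T - t) t x k.

Definition Gt (i t : nat) (a : Z) (k : nat) : R :=
  cv i * IZR a + ch i * E_nb (rZ k) (p_t t) (fun n => pos (IZR a - INR n))
  + cb i * E_nb (rZ k) (p_t t) (fun n => pos (INR n - IZR a))
  + E_nb2 (rZ k) (rK k) (p_t t)
      (fun n l => Vt i (S t) (a - Z.of_nat n)%Z (k + n + l)%nat).

End Model.

From Pilot Require Import Defs.
From Stdlib Require Import Reals ZArith Lia Lra Psatz.
From Coquelicot Require Import Coquelicot.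
Open Scope R_scope.

(** The proof is a backward induction on a shape invariant of the value
    function [W x k]: nonnegative, of linear growth, convex in the stock [x],
    with [x]-increments nonincreasing in [k] and at least [-cv].

    - Negative binomial facts: [NB(r+1,p)] is the convolution of [NB(r,p)]
      with a geometric law, so increasing the shape [r] by an integer lowers
      the expectation of nonincreasing integrands (stochastic monotonicity)
      and changes mass and mean predictably, which preserves linear growth.
    - Minimisation: for a convex [F], raising the lower bound [x] of
      [inf_{a >= x} F a] by one changes it by [max (F (x+1) - F x) 0].
    - One step: if [W] has the shape, the level increment of [G] equals
      [cv + E[marginal]], where the marginal cost is nonincreasing in the
      demand [n] and in [k], nondecreasing in [a], and bounded below; hence
      [G] is convex and its increment is nonincreasing in [k] (part (i)).
      Then [V x = min_{a >= x} G a - cv x] has increment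
      [max (G (x+1) - G x) 0 - cv], so [V] has the shape again (part (ii)). *)

(** Termwise comparison of two convergent series (no sign condition). *)
Lemma Series_le_cv (a b : nat -> R) :
  ex_series a -> ex_series b -> (forall n, a n <= b n) -> Series a <= Series b.
Proof.
  intros Ha Hb Hab.
  assert (Hzero : Series (fun _ => 0) = 0).
  { rewrite (Series_ext _ (fun n => 0 * 1)) by (intros; ring).
    rewrite Series_scal_l; ring. }
  assert (Hdiff : 0 <= Series (fun n => b n - a n)).
  { rewrite <- Hzero. apply Series_le.
    - intros n; specialize (Hab n); lra.
    - apply (ex_series_minus b a); assumption. }
  rewrite Series_minus in Hdiff by assumption. lra.
Qed.

Lemma ex_series_ratio (a : nat -> R) (th : R) (n0 : nat) :
  (forall n, 0 <= a n) -> 0 <= th < 1 ->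
  (forall n, (n0 <= n)%nat -> a (S n) <= th * a n) -> ex_series a.
Proof.
  intros Hpos Hth Hratio.
  apply (ex_series_incr_n a n0).
  assert (Hgeom : forall k, a (n0 + k)%nat <= a n0 * th ^ k).
  { induction k as [|k IH].
    - rewrite Nat.add_0_r; simpl; lra.
    - replace (n0 + S k)%nat with (S (n0 + k)) by lia.
      eapply Rle_trans; [apply Hratio; lia|]. simpl.
      replace (a n0 * (th * th ^ k)) with (th * (a n0 * th ^ k)) by ring.
      apply Rmult_le_compat_l; lra. }
  apply (@ex_series_le R_AbsRing R_CompleteNormedModule _ (fun k => a n0 * th ^ k)).
  - intros n. change (norm (a (n0 + n)%nat)) with (Rabs (a (n0 + n)%nat)).
    rewrite Rabs_pos_eq by auto. apply Hgeom.
  - apply (ex_series_scal_l (a n0) (fun k => th ^ k)).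
    apply ex_series_geom. rewrite Rabs_pos_eq; lra.
Qed.

Definition nb_coef (r : R) (n : nat) : R := rising r n / INR (fact n).

Lemma INR_fact_pos (n : nat) : 0 < INR (fact n).
Proof. apply lt_0_INR, lt_O_fact. Qed.

Lemma rising_nonneg (r : R) (n : nat) : 0 <= r -> 0 <= rising r n.
Proof.
  intros Hr; induction n as [|n IH]; simpl; [lra|].
  apply Rmult_le_pos; [exact IH|]. pose proof (pos_INR n); lra.
Qed.

Lemma rising_succ_shift (r : R) (n : nat) : rising r (S n) = r * rising (r + 1) n.
Proof.
  induction n as [|n IH]; [simpl; ring|].
  change (rising r (S (S n))) with (rising r (S n) * (r + INR (S n))).
  rewrite IH. simpl rising. rewrite !S_INR. ring.
Qed.

Lemma nb_coef_nonneg (r : R) (n : nat) : 0 <= r -> 0 <= nb_coef r n.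
Proof.
  intros Hr; unfold nb_coef.
  apply Rdiv_le_0_compat; [apply rising_nonneg; exact Hr | apply INR_fact_pos].
Qed.

Lemma nb_coef_succ (r : R) (n : nat) :
  nb_coef r (S n) = nb_coef r n * ((r + INR n) / INR (S n)).
Proof.
  unfold nb_coef. simpl rising. rewrite fact_simpl, mult_INR.
  pose proof (INR_fact_pos n). assert (0 < INR (S n)) by (apply lt_0_INR; lia).
  field. lra.
Qed.

Lemma nb_coef_size_biased (r : R) (n : nat) :
  INR (S n) * nb_coef r (S n) = r * nb_coef (r + 1) n.
Proof.
  unfold nb_coef. rewrite rising_succ_shift, fact_simpl, mult_INR.
  pose proof (INR_fact_pos n). assert (0 < INR (S n)) by (apply lt_0_INR; lia).
  field. lra.
Qed.

Lemma nb_coef_partial_sum (r : R) (m : nat) :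
  nb_coef (r + 1) m = sum_f_R0 (nb_coef r) m.
Proof.
  induction m as [|m IH]; [unfold nb_coef; simpl; field|].
  simpl sum_f_R0. rewrite <- IH.
  rewrite nb_coef_succ. unfold nb_coef. rewrite rising_succ_shift, fact_simpl, mult_INR.
  pose proof (INR_fact_pos m). assert (0 < INR (S m)) by (apply lt_0_INR; lia).
  rewrite S_INR in *. field. lra.
Qed.

Lemma nb_coef_series (r rho : R) :
  0 <= r -> 0 <= rho < 1 -> ex_series (fun n => nb_coef r n * rho ^ n).
Proof.
  intros Hr Hrho.
  set (th := (1 + rho) / 2).
  destruct (INR_unbounded (2 * r * rho / (1 - rho) + 1)) as [n0 Hn0].
  apply (ex_series_ratio _ th n0).
  - intros n; apply Rmult_le_pos; [apply nb_coef_nonneg; exact Hr | apply pow_le; lra].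
  - unfold th; lra.
  - intros n Hn. apply le_INR in Hn.
    assert (Hq : 2 * r * rho / (1 - rho) * (1 - rho) = 2 * r * rho) by (field; lra).
    assert (0 <= 2 * r * rho / (1 - rho)) by (apply Rdiv_le_0_compat; nra).
    assert (Hfac : (r + INR n) / INR (S n) * rho <= th).
    { rewrite S_INR. apply (Rmult_le_reg_r (INR n + 1)); [lra|].
      replace ((r + INR n) / (INR n + 1) * rho * (INR n + 1)) with ((r + INR n) * rho)
        by (field; lra).
      unfold th; nra. }
    assert (0 <= nb_coef r n * rho ^ n)
      by (apply Rmult_le_pos; [apply nb_coef_nonneg; exact Hr | apply pow_le; lra]).
    rewrite nb_coef_succ. simpl pow.
    replace (nb_coef r n * ((r + INR n) / INR (S n)) * (rho * rho ^ n))
      with ((nb_coef r n * rho ^ n) * ((r + INR n) / INR (S n) * rho)) by ring.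
    rewrite (Rmult_comm th). apply Rmult_le_compat_l; assumption.
Qed.

(** The same series weighted by [n] converges too (it is [r rho] times the
    generating series of [c_{r+1}], shifted by one). *)
Lemma nb_coef_series_mean (r rho : R) :
  0 <= r -> 0 <= rho < 1 -> ex_series (fun n => nb_coef r n * rho ^ n * INR n).
Proof.
  intros Hr Hrho.
  apply ex_series_incr_1.
  assert (Hs : ex_series (fun n => (r * rho) * (nb_coef (r + 1) n * rho ^ n))).
  { apply (ex_series_scal_l (r * rho) (fun n => nb_coef (r + 1) n * rho ^ n)).
    apply nb_coef_series; lra. }
  assert (Hterm : forall n, (r * rho) * (nb_coef (r + 1) n * rho ^ n)
                          = nb_coef r (S n) * rho ^ S n * INR (S n)).
  { intros n. simpl pow.
    replace (nb_coef r (S n) * (rho * rho ^ n) * INR (S n))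
      with (rho * rho ^ n * (INR (S n) * nb_coef r (S n))) by ring.
    rewrite nb_coef_size_biased. ring. }
  exact (ex_series_ext _ _ Hterm Hs).
Qed.

(** Every integrand of the model grows at most linearly in the summation
    variable; this is what makes all the negative binomial expectations
    below finite, and hence linear and monotone. *)

Definition lin_bounded (f : nat -> R) : Prop :=
  exists u v, forall n, Rabs (f n) <= u + v * INR n.

Lemma lin_bounded_of_bounded (f : nat -> R) (c : R) :
  (forall n, Rabs (f n) <= c) -> lin_bounded f.
Proof. intros Hc. exists c, 0. intros n; rewrite Rmult_0_l, Rplus_0_r; apply Hc. Qed.

Lemma lin_bounded_const (c : R) : lin_bounded (fun _ => c).
Proof. apply (lin_bounded_of_bounded _ (Rabs c)); intros; lra. Qed.

Lemma lin_bounded_id : lin_bounded INR.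
Proof. exists 0, 1. intros n; rewrite Rabs_pos_eq by apply pos_INR; lra. Qed.

Lemma lin_bounded_plus (f g : nat -> R) :
  lin_bounded f -> lin_bounded g -> lin_bounded (fun n => f n + g n).
Proof.
  intros [u1 [v1 H1]] [u2 [v2 H2]]. exists (u1 + u2), (v1 + v2). intros n.
  eapply Rle_trans; [apply Rabs_triang|]. specialize (H1 n); specialize (H2 n); lra.
Qed.

Lemma lin_bounded_scal (c : R) (f : nat -> R) :
  lin_bounded f -> lin_bounded (fun n => c * f n).
Proof.
  intros [u [v H]]. exists (Rabs c * u), (Rabs c * v). intros n.
  rewrite Rabs_mult. specialize (H n). pose proof (Rabs_pos c).
  replace (Rabs c * u + Rabs c * v * INR n) with (Rabs c * (u + v * INR n)) by ring.
  apply Rmult_le_compat_l; assumption.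
Qed.

Lemma lin_bounded_ext (f g : nat -> R) :
  lin_bounded f -> (forall n, g n = f n) -> lin_bounded g.
Proof. intros [u [v H]] Hfg. exists u, v. intros n; rewrite Hfg; apply H. Qed.

Lemma lin_bounded_minus (f g : nat -> R) :
  lin_bounded f -> lin_bounded g -> lin_bounded (fun n => f n - g n).
Proof.
  intros Hf Hg. apply (lin_bounded_ext (fun n => f n + -1 * g n)).
  - apply lin_bounded_plus; [exact Hf | apply lin_bounded_scal; exact Hg].
  - intros n; ring.
Qed.

Lemma nonincreasing_le (f : nat -> R) :
  (forall n, f (S n) <= f n) -> forall n m, (n <= m)%nat -> f m <= f n.
Proof. intros Hf n m Hnm. induction Hnm; [lra | eapply Rle_trans; eauto]. Qed.

Lemma nonincreasing_lin_bounded (f : nat -> R) (b : R) :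
  (forall n, f (S n) <= f n) -> (forall n, b <= f n) -> lin_bounded f.
Proof.
  intros Hf Hb. apply (lin_bounded_of_bounded _ (Rabs (f 0%nat) + Rabs b)).
  intros n. apply Rabs_le.
  pose proof (nonincreasing_le f Hf 0 n (Nat.le_0_l n)). specialize (Hb n).
  pose proof (Rle_abs (f 0%nat)). pose proof (Rabs_pos (f 0%nat)).
  pose proof (Rle_abs (- b)). rewrite Rabs_Ropp in *. pose proof (Rabs_pos b). lra.
Qed.

(** * Negative binomial expectations *)

Section NegativeBinomial.
Variable p : R.
Hypothesis Hp : 0 < p < 1.

Lemma nb_pmf_eq (r : R) (n : nat) :
  nb_pmf r p n = Rpower p r * (nb_coef r n * (1 - p) ^ n).
Proof. unfold nb_pmf, nb_coef; ring. Qed.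

Lemma nb_pmf_nonneg (r : R) (n : nat) : 0 <= r -> 0 <= nb_pmf r p n.
Proof.
  intros Hr; rewrite nb_pmf_eq. apply Rmult_le_pos; [left; apply exp_pos|].
  apply Rmult_le_pos; [apply nb_coef_nonneg; exact Hr | apply pow_le; lra].
Qed.

Lemma nb_abs_summable (r : R) (f : nat -> R) : 0 <= r -> lin_bounded f ->
  ex_series (fun n => Rabs (nb_pmf r p n * f n)).
Proof.
  intros Hr [u [v Hf]].
  assert (Hrho : 0 <= 1 - p < 1) by lra.
  pose proof (nb_coef_series r (1 - p) Hr Hrho) as H0.
  pose proof (nb_coef_series_mean r (1 - p) Hr Hrho) as H1.
  apply (@ex_series_le R_AbsRing R_CompleteNormedModule _
     (fun n => (Rpower p r * u) * (nb_coef r n * (1 - p) ^ n)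
             + (Rpower p r * v) * (nb_coef r n * (1 - p) ^ n * INR n))).
  - intros n. change (norm (Rabs (nb_pmf r p n * f n)))
      with (Rabs (Rabs (nb_pmf r p n * f n))).
    rewrite Rabs_Rabsolu, Rabs_mult, (Rabs_pos_eq (nb_pmf r p n))
      by (apply nb_pmf_nonneg; exact Hr).
    pose proof (nb_pmf_nonneg r n Hr) as Hpmf. rewrite nb_pmf_eq in *.
    replace (Rpower p r * u * (nb_coef r n * (1 - p) ^ n)
             + Rpower p r * v * (nb_coef r n * (1 - p) ^ n * INR n))
      with (Rpower p r * (nb_coef r n * (1 - p) ^ n) * (u + v * INR n)) by ring.
    apply Rmult_le_compat_l; [exact Hpmf | apply Hf].
  - apply (ex_series_plus (fun n => (Rpower p r * u) * (nb_coef r n * (1 - p) ^ n))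
                          (fun n => (Rpower p r * v) * (nb_coef r n * (1 - p) ^ n * INR n))).
    + apply (ex_series_scal_l (Rpower p r * u) (fun n => nb_coef r n * (1 - p) ^ n)), H0.
    + apply (ex_series_scal_l (Rpower p r * v)
               (fun n => nb_coef r n * (1 - p) ^ n * INR n)), H1.
Qed.

Lemma nb_summable (r : R) (f : nat -> R) : 0 <= r -> lin_bounded f ->
  ex_series (fun n => nb_pmf r p n * f n).
Proof. intros Hr Hf; apply ex_series_Rabs, nb_abs_summable; assumption. Qed.

Lemma E_nb2_iterated (r1 r2 : R) (g : nat -> nat -> R) :
  E_nb2 r1 r2 p g = E_nb r1 p (fun n => E_nb r2 p (g n)).
Proof. reflexivity. Qed.

Lemma E_ext (r : R) (f g : nat -> R) : (forall n, f n = g n) -> E_nb r p f = E_nb r p g.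
Proof. intros H; unfold E_nb; apply Series_ext; intros n; rewrite H; reflexivity. Qed.

Lemma E_scal (r c : R) (f : nat -> R) : E_nb r p (fun n => c * f n) = c * E_nb r p f.
Proof. unfold E_nb. rewrite <- Series_scal_l. apply Series_ext; intros; ring. Qed.

Lemma E_plus (r : R) (f g : nat -> R) : 0 <= r -> lin_bounded f -> lin_bounded g ->
  E_nb r p (fun n => f n + g n) = E_nb r p f + E_nb r p g.
Proof.
  intros Hr Hf Hg. unfold E_nb.
  rewrite <- Series_plus by (apply nb_summable; assumption).
  apply Series_ext; intros; ring.
Qed.

Lemma E_minus (r : R) (f g : nat -> R) : 0 <= r -> lin_bounded f -> lin_bounded g ->
  E_nb r p (fun n => f n - g n) = E_nb r p f - E_nb r p g.
Proof.
  intros Hr Hf Hg. unfold E_nb.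
  rewrite <- Series_minus by (apply nb_summable; assumption).
  apply Series_ext; intros; ring.
Qed.

Lemma E_mono (r : R) (f g : nat -> R) : 0 <= r -> lin_bounded f -> lin_bounded g ->
  (forall n, f n <= g n) -> E_nb r p f <= E_nb r p g.
Proof.
  intros Hr Hf Hg Hfg. apply Series_le_cv; try (apply nb_summable; assumption).
  intros n. apply Rmult_le_compat_l; [apply nb_pmf_nonneg; exact Hr | apply Hfg].
Qed.

Lemma E_nonneg (r : R) (f : nat -> R) : 0 <= r -> lin_bounded f ->
  (forall n, 0 <= f n) -> 0 <= E_nb r p f.
Proof.
  intros Hr Hf Hpos.
  replace 0 with (E_nb r p (fun _ => 0 * 1)) by (rewrite E_scal; ring).
  apply E_mono; [exact Hr | apply lin_bounded_const | exact Hf | intros n; rewrite Rmult_0_l; apply Hpos].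
Qed.

(** Total mass and mean of [NB(r,p)] (the mass is in fact 1, but we only
    need that it does not change along [r, r+1, r+2, ...]). *)
Definition nb_mass (r : R) : R := E_nb r p (fun _ => 1).
Definition nb_mean (r : R) : R := E_nb r p INR.

Lemma E_affine (r u v : R) : 0 <= r ->
  E_nb r p (fun n => u + v * INR n) = u * nb_mass r + v * nb_mean r.
Proof.
  intros Hr. unfold nb_mass, nb_mean.
  rewrite E_plus by (assumption || apply lin_bounded_const
                     || apply lin_bounded_scal, lin_bounded_id).
  rewrite <- !E_scal. f_equal; apply E_ext; intros; ring.
Qed.

Lemma nb_pmf_one (j : nat) : nb_pmf 1 p j = p * (1 - p) ^ j.
Proof.
  assert (Hr1 : forall j, rising 1 j = INR (fact j)).
  { induction j0 as [|j0 IH]; [reflexivity|].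
    simpl rising. rewrite IH, fact_simpl, mult_INR, S_INR. ring. }
  unfold nb_pmf. rewrite Hr1, Rpower_1 by lra.
  pose proof (INR_fact_pos j). field. lra.
Qed.

Lemma nb_mass_one : nb_mass 1 = 1.
Proof.
  unfold nb_mass, E_nb.
  rewrite (Series_ext _ (fun n => p * (1 - p) ^ n)) by (intros; rewrite nb_pmf_one; ring).
  rewrite Series_scal_l, Series_geom by (rewrite Rabs_pos_eq; lra). field; lra.
Qed.

Lemma nb_pmf_succ (r : R) (m : nat) :
  nb_pmf (r + 1) p m = sum_f_R0 (fun n => nb_pmf r p n * nb_pmf 1 p (m - n)) m.
Proof.
  rewrite nb_pmf_eq, nb_coef_partial_sum, Rpower_plus, Rpower_1 by lra.
  rewrite (sum_eq (fun n => nb_pmf r p n * nb_pmf 1 p (m - n))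
                 (fun n => nb_coef r n * (Rpower p r * p * (1 - p) ^ m))).
  - rewrite <- scal_sum. ring.
  - intros n Hn. rewrite nb_pmf_eq, nb_pmf_one.
    replace m with (n + (m - n))%nat at 2 by lia. rewrite pow_add. ring.
Qed.

Lemma nb_cauchy (r : R) (f g : nat -> R) : 0 <= r -> lin_bounded f -> lin_bounded g ->
  is_series (fun m => sum_f_R0 (fun n => (nb_pmf r p n * f n)
                                        * (nb_pmf 1 p (m - n) * g (m - n)%nat)) m)
            (E_nb r p f * E_nb 1 p g).
Proof.
  intros Hr Hf Hg. assert (H1 : 0 <= 1) by lra.
  apply (is_series_mult (fun n => nb_pmf r p n * f n) (fun n => nb_pmf 1 p n * g n));
    try (apply Series_correct, nb_summable; assumption);
    apply nb_abs_summable; assumption.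
Qed.

Lemma nb_mass_succ (r : R) : 0 <= r -> nb_mass (r + 1) = nb_mass r.
Proof.
  intros Hr.
  pose proof (nb_cauchy r _ _ Hr (lin_bounded_const 1) (lin_bounded_const 1)) as Hc.
  fold (nb_mass r) (nb_mass 1) in Hc. rewrite nb_mass_one, Rmult_1_r in Hc.
  unfold nb_mass at 1, E_nb. rewrite <- (is_series_unique _ _ Hc).
  apply Series_ext. intros m. rewrite nb_pmf_succ, Rmult_1_r. apply sum_eq. intros; ring.
Qed.

Lemma nb_mean_succ (r : R) : 0 <= r -> nb_mean (r + 1) = nb_mean r + nb_mass r * nb_mean 1.
Proof.
  intros Hr.
  pose proof (nb_cauchy r _ _ Hr lin_bounded_id (lin_bounded_const 1)) as Hc1.
  pose proof (nb_cauchy r _ _ Hr (lin_bounded_const 1) lin_bounded_id) as Hc2.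
  fold (nb_mean r) (nb_mass 1) in Hc1. fold (nb_mass r) (nb_mean 1) in Hc2.
  rewrite nb_mass_one, Rmult_1_r in Hc1.
  rewrite <- (is_series_unique _ _ Hc1), <- (is_series_unique _ _ Hc2).
  rewrite <- Series_plus by (eexists; eassumption).
  unfold nb_mean at 1, E_nb. apply Series_ext. intros m. rewrite nb_pmf_succ.
  rewrite <- sum_plus, Rmult_comm, scal_sum. apply sum_eq. intros n Hn.
  rewrite (minus_INR m n Hn). ring.
Qed.

(** Stochastic monotonicity: [NB(r+1,p)] dominates [NB(r,p)], so it gives a
    smaller expectation to a nonincreasing integrand. *)
Lemma E_succ_le (r : R) (f : nat -> R) (b : R) : 0 <= r ->
  (forall n, f (S n) <= f n) -> (forall n, b <= f n) -> E_nb (r + 1) p f <= E_nb r p f.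
Proof.
  intros Hr Hf Hb. pose proof (nonincreasing_lin_bounded f b Hf Hb) as Hlin.
  pose proof (nb_cauchy r _ _ Hr Hlin (lin_bounded_const 1)) as Hc.
  fold (nb_mass 1) in Hc. rewrite nb_mass_one, Rmult_1_r in Hc.
  rewrite <- (is_series_unique _ _ Hc).
  apply Series_le_cv; [apply nb_summable; [lra | exact Hlin] | eexists; eassumption|].
  intros m. rewrite nb_pmf_succ, Rmult_comm, scal_sum.
  apply sum_Rle. intros n Hn.
  pose proof (nb_pmf_nonneg r n Hr). assert (0 <= nb_pmf 1 p (m - n)) by (apply nb_pmf_nonneg; lra).
  pose proof (nonincreasing_le f Hf n m Hn).
  replace (nb_pmf r p n * f n * (nb_pmf 1 p (m - n) * 1))
    with (nb_pmf r p n * nb_pmf 1 p (m - n) * f n) by ring.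
  apply Rmult_le_compat_l; [apply Rmult_le_pos|]; assumption.
Qed.

Lemma nb_mass_shift (r : R) (j : nat) : 0 <= r -> nb_mass (r + INR j) = nb_mass r.
Proof.
  intros Hr; induction j as [|j IH]; [simpl; rewrite Rplus_0_r; reflexivity|].
  rewrite S_INR, <- Rplus_assoc, nb_mass_succ; [exact IH|]. pose proof (pos_INR j); lra.
Qed.

Lemma nb_mean_shift (r : R) (j : nat) : 0 <= r ->
  nb_mean (r + INR j) = nb_mean r + INR j * (nb_mass r * nb_mean 1).
Proof.
  intros Hr; induction j as [|j IH]; [simpl; rewrite Rplus_0_r; ring|].
  pose proof (pos_INR j).
  rewrite S_INR, <- Rplus_assoc, nb_mean_succ, IH, nb_mass_shift by lra. ring.
Qed.

Lemma E_shift_le (r : R) (j : nat) (f : nat -> R) (b : R) : 0 <= r ->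
  (forall n, f (S n) <= f n) -> (forall n, b <= f n) -> E_nb (r + INR j) p f <= E_nb r p f.
Proof.
  intros Hr Hf Hb; induction j as [|j IH]; [simpl; rewrite Rplus_0_r; lra|].
  pose proof (pos_INR j).
  rewrite S_INR, <- Rplus_assoc. eapply Rle_trans; [|exact IH].
  apply (E_succ_le _ f b); [lra | exact Hf | exact Hb].
Qed.

End NegativeBinomial.

(** Negative binomial
    averaging preserves this kind of bound, which keeps every expectation
    of the recursion finite. *)

Definition lin_growth (W : Z -> nat -> R) : Prop :=
  exists A B, 0 <= A /\ 0 <= B /\ forall x k, W x k <= A + B * (Rabs (IZR x) + INR k).

Lemma lin_growth_plus (W1 W2 : Z -> nat -> R) :
  lin_growth W1 -> lin_growth W2 -> lin_growth (fun x k => W1 x k + W2 x k).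
Proof.
  intros (A1 & B1 & HA1 & HB1 & H1) (A2 & B2 & HA2 & HB2 & H2).
  exists (A1 + A2), (B1 + B2). split; [lra | split; [lra|]].
  intros x k. specialize (H1 x k); specialize (H2 x k). lra.
Qed.

Lemma lin_growth_scal (c : R) (W : Z -> nat -> R) :
  0 <= c -> lin_growth W -> lin_growth (fun x k => c * W x k).
Proof.
  intros Hc (A & B & HA & HB & H). exists (c * A), (c * B).
  split; [nra | split; [nra|]]. intros x k.
  replace (c * A + c * B * (Rabs (IZR x) + INR k)) with (c * (A + B * (Rabs (IZR x) + INR k)))
    by ring.
  apply Rmult_le_compat_l; [exact Hc | apply H].
Qed.

Section GrowthUnderExpectation.
Variable p : R.
Hypothesis Hp : 0 < p < 1.

Lemma E_lin_growth {X : Type} (size : X -> R) (shape : X -> nat) (r0 : R) (d : nat)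
    (f : X -> nat -> R) (A B : R) :
  0 <= r0 -> 0 <= A -> 0 <= B -> (forall x, INR (shape x) <= size x) ->
  (forall x n, Rabs (f x n) <= A + B * (size x + INR n)) ->
  exists A' B', 0 <= A' /\ 0 <= B' /\
    forall x, E_nb (r0 + INR (d * shape x)) p (f x) <= A' + B' * size x.
Proof.
  intros Hr0 HA HB Hsize Hf.
  assert (HM : 0 <= nb_mass p r0)
    by (apply E_nonneg; [exact Hp | exact Hr0 | apply lin_bounded_const | intros; lra]).
  assert (HE0 : 0 <= nb_mean p r0)
    by (apply E_nonneg; [exact Hp | exact Hr0 | apply lin_bounded_id | apply pos_INR]).
  assert (HE1 : 0 <= nb_mean p 1)
    by (apply E_nonneg; [exact Hp | lra | apply lin_bounded_id | apply pos_INR]).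
  pose proof (pos_INR d) as Hd.
  assert (Hslope : 0 <= B * INR d * nb_mass p r0 * nb_mean p 1)
    by (repeat apply Rmult_le_pos; assumption).
  exists (A * nb_mass p r0 + B * nb_mean p r0), (B * nb_mass p r0 + B * INR d * nb_mass p r0 * nb_mean p 1).
  split; [nra | split; [nra|]].
  intros x. pose proof (pos_INR (shape x)) as Hk. pose proof (Hsize x) as Hkx.
  assert (Hr : 0 <= r0 + INR (d * shape x)) by (pose proof (pos_INR (d * shape x)); lra).
  eapply Rle_trans.
  { apply (E_mono p Hp _ _ (fun n => (A + B * size x) + B * INR n)); [exact Hr | | |].
    - exists (A + B * size x), B. intros n. specialize (Hf x n). lra.
    - apply lin_bounded_plus; [apply lin_bounded_const | apply lin_bounded_scal, lin_bounded_id].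
    - intros n. specialize (Hf x n). pose proof (Rle_abs (f x n)). lra. }
  rewrite E_affine, nb_mass_shift, nb_mean_shift, mult_INR by assumption.
  assert (0 <= B * INR d * nb_mass p r0 * nb_mean p 1 * (size x - INR (shape x)))
    by (apply Rmult_le_pos; lra).
  nra.
Qed.

Lemma E_lin_growth_state (r0 : R) (d : nat) (rr : nat -> R) (f : Z -> nat -> nat -> R) (A B : R) :
  0 <= r0 -> 0 <= A -> 0 <= B -> (forall k, rr k = r0 + INR (d * k)) ->
  (forall a k n, Rabs (f a k n) <= A + B * (Rabs (IZR a) + INR k + INR n)) ->
  lin_growth (fun a k => E_nb (rr k) p (f a k)).
Proof.
  intros Hr0 HA HB Hrr Hf.
  destruct (E_lin_growth (fun x : Z * nat => Rabs (IZR (fst x)) + INR (snd x)) snd r0 d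
              (fun x => f (fst x) (snd x)) A B Hr0 HA HB)
    as (A' & B' & HA' & HB' & HE).
  - intros x. pose proof (Rabs_pos (IZR (fst x))). lra.
  - intros x n. apply Hf.
  - exists A', B'. split; [exact HA' | split; [exact HB'|]].
    intros a k. rewrite Hrr. apply (HE (a, k)).
Qed.

End GrowthUnderExpectation.

(** * Minimisation over order-up-to levels

    For a
    discretely convex [F] it moves by [max (F (x+1) - F x) 0] when [x] is
    raised by one: either [F] increases at [x] and both infima are attained
    at their lower end, or it decreases and raising [x] costs nothing. *)

Definition Zconvex (F : Z -> R) : Prop :=
  forall a, F (a + 1)%Z - F a <= F (a + 1 + 1)%Z - F (a + 1)%Z.

Lemma inf_ge_ext (x : Z) (F F' : Z -> R) :
  (forall a, F a = F' a) -> inf_ge x F = inf_ge x F'.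
Proof.
  intros H; unfold inf_ge. f_equal. apply Glb_Rbar_eqset.
  intros y; split; intros [a [Ha Hy]]; exists a; split; auto; rewrite Hy, H; reflexivity.
Qed.

(** A lower bound makes the infimum finite, hence a genuine real infimum. *)
Lemma inf_ge_spec (x : Z) (F : Z -> R) (b : R) :
  (forall a, (x <= a)%Z -> b <= F a) ->
  Glb_Rbar (fun y => exists a : Z, (x <= a)%Z /\ y = F a) = Finite (inf_ge x F) /\
  b <= inf_ge x F <= F x.
Proof.
  intros Hb.
  destruct (Glb_Rbar_correct (fun y => exists a : Z, (x <= a)%Z /\ y = F a)) as [Hlb Hglb].
  assert (Hge : Rbar_le (Finite b) (Glb_Rbar (fun y => exists a : Z, (x <= a)%Z /\ y = F a))).
  { apply Hglb. intros y [a [Ha ->]]. apply Hb, Ha. }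
  assert (Hle : Rbar_le (Glb_Rbar (fun y => exists a : Z, (x <= a)%Z /\ y = F a)) (Finite (F x))).
  { apply Hlb. exists x; split; [lia | reflexivity]. }
  unfold inf_ge.
  destruct (Glb_Rbar (fun y => exists a : Z, (x <= a)%Z /\ y = F a));
    simpl in *; try contradiction.
  split; [reflexivity | split; assumption].
Qed.

Lemma inf_ge_shift (x : Z) (F : Z -> R) (c b : R) :
  (forall a, (x <= a)%Z -> b <= F a) ->
  inf_ge x (fun a => F a + c) = inf_ge x F + c.
Proof.
  intros Hb. destruct (inf_ge_spec x F b Hb) as [Hfin _].
  destruct (Glb_Rbar_correct (fun y => exists a : Z, (x <= a)%Z /\ y = F a)) as [Hlb Hglb].
  rewrite Hfin in Hlb, Hglb.
  unfold inf_ge at 1. rewrite (is_glb_Rbar_unique _ (Finite (inf_ge x F + c))); [reflexivity|].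
  split.
  - intros y [a [Ha ->]].
    assert (Rbar_le (Finite (inf_ge x F)) (Finite (F a))) by (apply Hlb; exists a; auto).
    simpl in *; lra.
  - intros l Hl.
    assert (Hl' : is_lb_Rbar (fun y => exists a : Z, (x <= a)%Z /\ y = F a)
                             (Rbar_minus l (Finite c))).
    { intros y [a [Ha ->]].
      assert (Rbar_le l (Finite (F a + c))) by (apply Hl; exists a; auto).
      destruct l; simpl in *; try contradiction; auto; lra. }
    apply Hglb in Hl'. destruct l; simpl in *; auto; lra.
Qed.

Lemma Zconvex_min (F : Z -> R) (x : Z) :
  Zconvex F -> F x <= F (x + 1)%Z -> forall a, (x <= a)%Z -> F x <= F a.
Proof.
  intros Hconv H0 a Ha.
  assert (Hinc : forall m : nat, F (x + Z.of_nat m)%Z <= F (x + Z.of_nat m + 1)%Z).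
  { induction m as [|m IH]; [rewrite Z.add_0_r; exact H0|].
    replace (x + Z.of_nat (S m))%Z with (x + Z.of_nat m + 1)%Z by lia.
    specialize (Hconv (x + Z.of_nat m)%Z). lra. }
  assert (Hmin : forall m : nat, F x <= F (x + Z.of_nat m)%Z).
  { induction m as [|m IH]; [rewrite Z.add_0_r; lra|].
    replace (x + Z.of_nat (S m))%Z with (x + Z.of_nat m + 1)%Z by lia.
    specialize (Hinc m). lra. }
  replace a with (x + Z.of_nat (Z.to_nat (a - x)))%Z by lia. apply Hmin.
Qed.

Lemma inf_ge_attained (x : Z) (F : Z -> R) :
  Zconvex F -> F x <= F (x + 1)%Z -> inf_ge x F = F x.
Proof.
  intros Hconv H0; unfold inf_ge.
  rewrite (is_glb_Rbar_unique _ (Finite (F x))); [reflexivity|]. split.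
  - intros y [a [Ha ->]]; simpl. apply Zconvex_min; assumption.
  - intros l Hl. apply Hl. exists x; split; [lia | reflexivity].
Qed.

Lemma inf_ge_skip (x : Z) (F : Z -> R) :
  F (x + 1)%Z < F x -> inf_ge x F = inf_ge (x + 1)%Z F.
Proof.
  intros Hdec; unfold inf_ge. f_equal. apply is_glb_Rbar_unique.
  destruct (Glb_Rbar_correct (fun y => exists a : Z, (x + 1 <= a)%Z /\ y = F a)) as [Hlb Hglb].
  split.
  - intros y [a [Ha ->]]. destruct (Z.eq_dec a x) as [->|Hne].
    + apply Rbar_le_trans with (Finite (F (x + 1)%Z)).
      * apply Hlb. exists (x + 1)%Z; split; [lia | reflexivity].
      * simpl; lra.
    + apply Hlb. exists a; split; [lia | reflexivity].
  - intros l Hl. apply Hglb. intros y [a [Ha ->]]. apply Hl. exists a; split; [lia | reflexivity].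
Qed.

Lemma inf_ge_increment (x : Z) (F : Z -> R) :
  Zconvex F -> inf_ge (x + 1)%Z F - inf_ge x F = Rmax (F (x + 1)%Z - F x) 0.
Proof.
  intros Hconv. destruct (Rle_dec (F x) (F (x + 1)%Z)) as [Hinc|Hdec].
  - rewrite Rmax_left by lra.
    assert (Hinc' : F (x + 1)%Z <= F (x + 1 + 1)%Z) by (specialize (Hconv x); lra).
    rewrite (inf_ge_attained x), (inf_ge_attained (x + 1)); auto.
  - rewrite Rmax_right by lra. rewrite (inf_ge_skip x) by lra. ring.
Qed.

(** * Newsvendor increments

    Raising the order-up-to level [a] by one changes the holding cost
    [(a-n)^+] and the backorder cost [(n-a)^+] by the indicator
    [below a n = 1{n <= a}] and by [-(1 - below a n)]. *)

Definition below (a : Z) (n : nat) : R := if Z.leb (Z.of_nat n) a then 1 else 0.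

Lemma below_range (a : Z) (n : nat) : 0 <= below a n <= 1.
Proof. unfold below; destruct (Z.leb _ _); lra. Qed.

Lemma below_antitone (a : Z) (n : nat) : below a (S n) <= below a n.
Proof.
  unfold below.
  destruct (Z.leb_spec (Z.of_nat (S n)) a), (Z.leb_spec (Z.of_nat n) a); lia || lra.
Qed.

Lemma below_monotone (a : Z) (n : nat) : below a n <= below (a + 1) n.
Proof.
  unfold below.
  destruct (Z.leb_spec (Z.of_nat n) a), (Z.leb_spec (Z.of_nat n) (a + 1)); lia || lra.
Qed.

Lemma lin_bounded_below (a : Z) : lin_bounded (below a).
Proof.
  apply (lin_bounded_of_bounded _ 1). intros n.
  destruct (below_range a n). rewrite Rabs_pos_eq; lra.
Qed.

Ltac split_below a n :=
  unfold below, Defs.pos, Rmax; rewrite ?plus_IZR, INR_IZR_INZ;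
  destruct (Z.leb_spec (Z.of_nat n) a) as [Hna|Hna];
  [ apply IZR_le in Hna
  | assert (Hna' : (a + 1 <= Z.of_nat n)%Z) by lia;
    apply IZR_le in Hna'; rewrite plus_IZR in Hna' ];
  repeat match goal with |- context [Rle_dec ?u ?v] => destruct (Rle_dec u v) end;
  lra.

Lemma holding_increment (a : Z) (n : nat) :
  Defs.pos (IZR (a + 1) - INR n) - Defs.pos (IZR a - INR n) = below a n.
Proof. split_below a n. Qed.

Lemma backorder_increment (a : Z) (n : nat) :
  Defs.pos (INR n - IZR (a + 1)) - Defs.pos (INR n - IZR a) = - (1 - below a n).
Proof. split_below a n. Qed.

Lemma holding_bounds (a : Z) (n : nat) :
  0 <= Defs.pos (IZR a - INR n) <= Rabs (IZR a).
Proof.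
  pose proof (Rle_abs (IZR a)). pose proof (Rabs_pos (IZR a)). pose proof (pos_INR n).
  unfold Defs.pos, Rmax. destruct (Rle_dec _ _); lra.
Qed.

Lemma backorder_bounds (a : Z) (n : nat) :
  0 <= Defs.pos (INR n - IZR a) <= Rabs (IZR a) + INR n.
Proof.
  pose proof (Rle_abs (- IZR a)). rewrite Rabs_Ropp in *.
  pose proof (Rabs_pos (IZR a)). pose proof (pos_INR n).
  unfold Defs.pos, Rmax. destruct (Rle_dec _ _); lra.
Qed.

Lemma lin_bounded_holding (a : Z) : lin_bounded (fun n => Defs.pos (IZR a - INR n)).
Proof.
  apply (lin_bounded_of_bounded _ (Rabs (IZR a))). intros n.
  destruct (holding_bounds a n). rewrite Rabs_pos_eq; assumption.
Qed.

Lemma lin_bounded_backorder (a : Z) : lin_bounded (fun n => Defs.pos (INR n - IZR a)).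
Proof.
  exists (Rabs (IZR a)), 1. intros n.
  destruct (backorder_bounds a n). rewrite Rabs_pos_eq; lra.
Qed.

(** * One step of the backward recursion *)

Record value_shape (cv : R) (W : Z -> nat -> R) : Prop := {
  shape_nonneg : forall x k, 0 <= W x k;
  shape_growth : lin_growth W;
  shape_convex : forall k, Zconvex (fun x => W x k);
  shape_antitone : forall x k1 k2, (k1 <= k2)%nat ->
    W (x + 1)%Z k2 - W x k2 <= W (x + 1)%Z k1 - W x k1;
  shape_slope : forall x k, - cv <= W (x + 1)%Z k - W x k }.

Lemma value_shape_ext (cv : R) (W W' : Z -> nat -> R) :
  (forall x k, W x k = W' x k) -> value_shape cv W -> value_shape cv W'.
Proof.
  intros E [Hnn (A & B & HA & HB & Hg) Hconv Hanti Hslope].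
  split.
  - intros x k; rewrite <- E; apply Hnn.
  - exists A, B. split; [exact HA | split; [exact HB|]]. intros x k; rewrite <- E; apply Hg.
  - intros k x. unfold Zconvex in *. rewrite <- !E. apply Hconv.
  - intros x k1 k2 Hk; rewrite <- !E; apply Hanti, Hk.
  - intros x k; rewrite <- !E; apply Hslope.
Qed.

Lemma zero_shape (cv : R) : 0 <= cv -> value_shape cv (fun _ _ => 0).
Proof.
  intros Hcv. split; repeat intro; try lra.
  exists 0, 0. split; [lra | split; [lra|]]. intros; lra.
Qed.

Section OneStep.
(** One epoch with demand [Z ~ NB(rz k, p)], the other locations' demand
    [K ~ NB(rk k, p)], unit costs [cv, ch, cb], and next-epoch value [W]. *)
Variables (p cv ch cb r0 s0 : R) (d : nat) (rz rk : nat -> R) (W : Z -> nat -> R).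
Hypotheses (Hp : 0 < p < 1) (Hcv : 0 <= cv) (Hch : 0 <= ch) (Hcb : 0 <= cb)
  (Hr0 : 0 <= r0) (Hs0 : 0 <= s0)
  (Hrz : forall k, rz k = r0 + INR k) (Hrk : forall k, rk k = s0 + INR (d * k))
  (HW : value_shape cv W).

Definition dW (x : Z) (k : nat) : R := W (x + 1)%Z k - W x k.

(** Expected next-epoch value after ordering up to [a] and observing demand [n]. *)
Definition continuation (a : Z) (k n : nat) : R :=
  E_nb (rk k) p (fun l => W (a - Z.of_nat n)%Z (k + n + l)%nat).

(** Cost-to-go of the order-up-to level [a]; the last term is [E_nb2] of
    [Defs] written as an iterated expectation. *)
Definition G (a : Z) (k : nat) : R :=
  cv * IZR a + ch * E_nb (rz k) p (fun n => Defs.pos (IZR a - INR n))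
  + cb * E_nb (rz k) p (fun n => Defs.pos (INR n - IZR a))
  + E_nb (rz k) p (continuation a k).

(** Marginal cost of raising the level from [a] to [a+1] when demand is [n]. *)
Definition marginal (k : nat) (a : Z) (n : nat) : R :=
  ch * below a n - cb * (1 - below a n)
  + E_nb (rk k) p (fun l => dW (a - Z.of_nat n)%Z (k + n + l)%nat).

Definition V (x : Z) (k : nat) : R := inf_ge x (fun a => G a k - cv * IZR x).

Lemma rz_nonneg (k : nat) : 0 <= rz k.
Proof. rewrite Hrz; pose proof (pos_INR k); lra. Qed.

Lemma rk_nonneg (k : nat) : 0 <= rk k.
Proof. rewrite Hrk; pose proof (pos_INR (d * k)); lra. Qed.

Lemma lin_bounded_W_tail (y : Z) (j : nat) : lin_bounded (fun l => W y (j + l)%nat).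
Proof.
  destruct (shape_growth _ _ HW) as (A & B & HA & HB & Hg).
  exists (A + B * (Rabs (IZR y) + INR j)), B. intros l.
  rewrite Rabs_pos_eq by apply (shape_nonneg _ _ HW).
  eapply Rle_trans; [apply Hg|]. rewrite plus_INR; lra.
Qed.

Lemma lin_bounded_dW_tail (y : Z) (j : nat) : lin_bounded (fun l => dW y (j + l)%nat).
Proof. apply (lin_bounded_minus (fun l => W (y + 1)%Z (j + l)%nat)); apply lin_bounded_W_tail. Qed.

Lemma continuation_growth : exists A B, 0 <= A /\ 0 <= B /\
  forall a k n, 0 <= continuation a k n <= A + B * (Rabs (IZR a) + INR k + INR n).
Proof.
  destruct (shape_growth _ _ HW) as (A & B & HA & HB & Hg).
  set (size := fun x : Z * nat * nat =>
                 Rabs (IZR (fst (fst x))) + INR (snd (fst x)) + INR (snd x)).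
  destruct (E_lin_growth p Hp size (fun x => snd (fst x)) s0 d
      (fun x l => W (fst (fst x) - Z.of_nat (snd x))%Z (snd (fst x) + snd x + l)%nat)
      A (2 * B) Hs0 HA ltac:(lra)) as (A' & B' & HA' & HB' & HE).
  - intros [[a k] n]; unfold size; simpl.
    pose proof (Rabs_pos (IZR a)); pose proof (pos_INR n); lra.
  - intros [[a k] n] l; unfold size; simpl.
    rewrite Rabs_pos_eq by apply (shape_nonneg _ _ HW).
    eapply Rle_trans; [apply Hg|].
    assert (Hdrop : B * Rabs (IZR (a - Z.of_nat n)) <= B * (Rabs (IZR a) + INR n)).
    { apply Rmult_le_compat_l; [exact HB|].
      rewrite minus_IZR, <- INR_IZR_INZ. unfold Rminus.
      eapply Rle_trans; [apply Rabs_triang|].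
      rewrite Rabs_Ropp, (Rabs_pos_eq (INR n)) by apply pos_INR. lra. }
    rewrite !plus_INR. pose proof (pos_INR l). pose proof (pos_INR n). pose proof (pos_INR k).
    pose proof (Rabs_pos (IZR a)). nra.
  - exists A', B'. split; [exact HA' | split; [exact HB'|]]. intros a k n. split.
    + apply E_nonneg; [exact Hp | apply rk_nonneg | apply lin_bounded_W_tail |].
      intros; apply (shape_nonneg _ _ HW).
    + unfold continuation. rewrite Hrk. apply (HE (a, k, n)).
Qed.

Lemma lin_bounded_continuation (a : Z) (k : nat) : lin_bounded (continuation a k).
Proof.
  destruct continuation_growth as (A & B & HA & HB & Hc).
  exists (A + B * (Rabs (IZR a) + INR k)), B. intros n.
  destruct (Hc a k n). rewrite Rabs_pos_eq; lra.
Qed.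

Lemma continuation_increment (a : Z) (k n : nat) :
  continuation (a + 1)%Z k n - continuation a k n
  = E_nb (rk k) p (fun l => dW (a - Z.of_nat n)%Z (k + n + l)%nat).
Proof.
  unfold continuation.
  rewrite <- E_minus by (exact Hp || apply rk_nonneg || apply (lin_bounded_W_tail _ (k + n))).
  apply E_ext. intros l. unfold dW.
  replace (a + 1 - Z.of_nat n)%Z with (a - Z.of_nat n + 1)%Z by lia. reflexivity.
Qed.

Lemma lin_bounded_expected_dW (a : Z) (k : nat) :
  lin_bounded (fun n => E_nb (rk k) p (fun l => dW (a - Z.of_nat n)%Z (k + n + l)%nat)).
Proof.
  apply (lin_bounded_ext (fun n => continuation (a + 1)%Z k n - continuation a k n)).
  - apply lin_bounded_minus; apply lin_bounded_continuation.
  - intros n; symmetry; apply continuation_increment.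
Qed.

Lemma lin_bounded_marginal (k : nat) (a : Z) : lin_bounded (marginal k a).
Proof.
  apply lin_bounded_plus.
  - apply lin_bounded_minus; apply lin_bounded_scal;
      [| apply lin_bounded_minus; [apply lin_bounded_const|]]; apply lin_bounded_below.
  - apply lin_bounded_expected_dW.
Qed.

Lemma G_increment (a : Z) (k : nat) :
  G (a + 1)%Z k - G a k = cv + E_nb (rz k) p (marginal k a).
Proof.
  pose proof (rz_nonneg k) as Hr.
  assert (Hhold : E_nb (rz k) p (fun n => Defs.pos (IZR (a + 1) - INR n))
                  = E_nb (rz k) p (fun n => Defs.pos (IZR a - INR n)) + E_nb (rz k) p (below a)).
  { rewrite <- E_plus by (exact Hp || exact Hr || apply lin_bounded_holding
                         || apply lin_bounded_below).
    apply E_ext; intros n. pose proof (holding_increment a n). lra. }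
  assert (Hback : E_nb (rz k) p (fun n => Defs.pos (INR n - IZR (a + 1)))
                  = E_nb (rz k) p (fun n => Defs.pos (INR n - IZR a))
                    - E_nb (rz k) p (fun n => 1 - below a n)).
  { rewrite <- E_minus by (exact Hp || exact Hr || apply lin_bounded_backorder
       || (apply lin_bounded_minus; [apply lin_bounded_const | apply lin_bounded_below])).
    apply E_ext; intros n. pose proof (backorder_increment a n). lra. }
  assert (Hcont : E_nb (rz k) p (continuation (a + 1)%Z k)
                  = E_nb (rz k) p (continuation a k)
                    + E_nb (rz k) p (fun n => E_nb (rk k) p
                         (fun l => dW (a - Z.of_nat n)%Z (k + n + l)%nat))).
  { rewrite <- E_plus by (exact Hp || exact Hr || apply lin_bounded_continuation
       || apply lin_bounded_expected_dW).
    apply E_ext; intros n. pose proof (continuation_increment a k n). lra. }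
  assert (Hmarg : E_nb (rz k) p (marginal k a)
                  = ch * E_nb (rz k) p (below a) - cb * E_nb (rz k) p (fun n => 1 - below a n)
                    + E_nb (rz k) p (fun n => E_nb (rk k) p
                         (fun l => dW (a - Z.of_nat n)%Z (k + n + l)%nat))).
  { unfold marginal. rewrite E_plus, E_minus, !E_scal; try exact Hp; try exact Hr.
    - reflexivity.
    - apply lin_bounded_scal, lin_bounded_below.
    - apply lin_bounded_scal, lin_bounded_minus; [apply lin_bounded_const | apply lin_bounded_below].
    - apply lin_bounded_minus; apply lin_bounded_scal;
        [| apply lin_bounded_minus; [apply lin_bounded_const|]]; apply lin_bounded_below.
    - apply lin_bounded_expected_dW. }
  unfold G. rewrite Hhold, Hback, Hcont, Hmarg, plus_IZR. ring.
Qed.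

Lemma dW_convex (y : Z) (k : nat) : dW y k <= dW (y + 1)%Z k.
Proof. apply (shape_convex _ _ HW k y). Qed.

Lemma dW_antitone (y : Z) (k1 k2 : nat) : (k1 <= k2)%nat -> dW y k2 <= dW y k1.
Proof. apply (shape_antitone _ _ HW). Qed.

(** A larger demand statistic makes raising the level less valuable: via
    the shape of [W], and because [K] becomes stochastically larger. *)
Lemma marginal_antitone_k (k1 k2 : nat) (a : Z) (n : nat) :
  (k1 <= k2)%nat -> marginal k2 a n <= marginal k1 a n.
Proof.
  intros Hk. unfold marginal. apply Rplus_le_compat_l.
  assert (Hshift : rk k2 = rk k1 + INR (d * (k2 - k1))).
  { rewrite !Hrk, Rplus_assoc, <- plus_INR. do 2 f_equal. nia. }
  apply Rle_trans with (E_nb (rk k2) p (fun l => dW (a - Z.of_nat n)%Z (k1 + n + l)%nat)).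
  - apply E_mono; [exact Hp | apply rk_nonneg | apply (lin_bounded_dW_tail _ (k2 + n))
                  | apply (lin_bounded_dW_tail _ (k1 + n)) |].
    intros l. apply dW_antitone. lia.
  - rewrite Hshift. apply (E_shift_le p Hp _ _ _ (- cv)); [apply rk_nonneg | |].
    + intros l. apply dW_antitone. lia.
    + intros l. apply (shape_slope _ _ HW).
Qed.

(** A larger demand also makes it less valuable (convexity of [W]). *)
Lemma marginal_antitone_n (k : nat) (a : Z) (n : nat) : marginal k a (S n) <= marginal k a n.
Proof.
  unfold marginal. pose proof (below_antitone a n). pose proof (below_range a n).
  pose proof (below_range a (S n)).
  apply Rplus_le_compat; [nra|].
  apply E_mono; [exact Hp | apply rk_nonneg | apply (lin_bounded_dW_tail _ (k + S n))
                | apply (lin_bounded_dW_tail _ (k + n)) |].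
  intros l. eapply Rle_trans; [apply (dW_antitone _ (k + n + l)); lia|].
  replace (a - Z.of_nat n)%Z with (a - Z.of_nat (S n) + 1)%Z by lia. apply dW_convex.
Qed.

Lemma marginal_lower (k : nat) (a : Z) (n : nat) : - cb - cv * nb_mass p s0 <= marginal k a n.
Proof.
  unfold marginal. pose proof (below_range a n).
  assert (Hsell : - cb <= ch * below a n - cb * (1 - below a n)) by nra.
  assert (Hcont : - cv * nb_mass p s0
                  <= E_nb (rk k) p (fun l => dW (a - Z.of_nat n)%Z (k + n + l)%nat)).
  { rewrite <- (nb_mass_shift p Hp s0 (d * k) Hs0), <- Hrk. unfold nb_mass.
    rewrite <- E_scal.
    apply E_mono; [exact Hp | apply rk_nonneg | apply lin_bounded_scal, lin_bounded_const
                  | apply (lin_bounded_dW_tail _ (k + n)) |].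
    intros l. rewrite Rmult_1_r. apply (shape_slope _ _ HW). }
  lra.
Qed.

Lemma marginal_monotone_a (k : nat) (a : Z) (n : nat) : marginal k a n <= marginal k (a + 1)%Z n.
Proof.
  unfold marginal. pose proof (below_monotone a n).
  apply Rplus_le_compat; [nra|].
  apply E_mono; [exact Hp | apply rk_nonneg | apply (lin_bounded_dW_tail _ (k + n))
                | apply (lin_bounded_dW_tail _ (k + n)) |].
  intros l. replace (a + 1 - Z.of_nat n)%Z with (a - Z.of_nat n + 1)%Z by lia. apply dW_convex.
Qed.

Lemma G_increment_antitone_k (a : Z) (k1 k2 : nat) :
  (k1 <= k2)%nat -> G (a + 1)%Z k2 - G a k2 <= G (a + 1)%Z k1 - G a k1.
Proof.
  intros Hk. rewrite !G_increment. apply Rplus_le_compat_l.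
  assert (Hshift : rz k2 = rz k1 + INR (k2 - k1)).
  { rewrite !Hrz, Rplus_assoc, <- plus_INR. do 2 f_equal. lia. }
  apply Rle_trans with (E_nb (rz k2) p (marginal k1 a)).
  - apply E_mono; [exact Hp | apply rz_nonneg | apply lin_bounded_marginal
                  | apply lin_bounded_marginal |].
    intros n; apply marginal_antitone_k, Hk.
  - rewrite Hshift. apply (E_shift_le p Hp _ _ _ (- cb - cv * nb_mass p s0));
      [apply rz_nonneg | apply marginal_antitone_n | apply marginal_lower].
Qed.

Lemma G_convex (k : nat) : Zconvex (fun a => G a k).
Proof.
  intros a. rewrite (G_increment a), (G_increment (a + 1)). apply Rplus_le_compat_l.
  apply E_mono; [exact Hp | apply rz_nonneg | apply lin_bounded_marginal
                | apply lin_bounded_marginal |].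
  intros n; apply marginal_monotone_a.
Qed.

(** All costs beyond ordering are nonnegative. *)
Lemma G_lower (a : Z) (k : nat) : cv * IZR a <= G a k.
Proof.
  destruct continuation_growth as (A & B & _ & _ & Hc).
  pose proof (rz_nonneg k) as Hr. unfold G.
  assert (0 <= E_nb (rz k) p (fun n => Defs.pos (IZR a - INR n)))
    by (apply E_nonneg; [exact Hp | exact Hr | apply lin_bounded_holding | apply holding_bounds]).
  assert (0 <= E_nb (rz k) p (fun n => Defs.pos (INR n - IZR a)))
    by (apply E_nonneg; [exact Hp | exact Hr | apply lin_bounded_backorder | apply backorder_bounds]).
  assert (0 <= E_nb (rz k) p (continuation a k))
    by (apply E_nonneg; [exact Hp | exact Hr | apply lin_bounded_continuation | apply Hc]).
  nra.
Qed.

Lemma G_growth : lin_growth (fun a k => G a k - cv * IZR a).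
Proof.
  assert (Hrz1 : forall k, rz k = r0 + INR (1 * k)) by (intros k; rewrite Nat.mul_1_l; apply Hrz).
  assert (Hhold : lin_growth (fun a k => E_nb (rz k) p (fun n => Defs.pos (IZR a - INR n)))).
  { apply (E_lin_growth_state p Hp r0 1 rz _ 0 1 Hr0 ltac:(lra) ltac:(lra) Hrz1).
    intros a k n. destruct (holding_bounds a n).
    pose proof (pos_INR k); pose proof (pos_INR n). rewrite Rabs_pos_eq; lra. }
  assert (Hback : lin_growth (fun a k => E_nb (rz k) p (fun n => Defs.pos (INR n - IZR a)))).
  { apply (E_lin_growth_state p Hp r0 1 rz _ 0 1 Hr0 ltac:(lra) ltac:(lra) Hrz1).
    intros a k n. destruct (backorder_bounds a n).
    pose proof (pos_INR k). rewrite Rabs_pos_eq; lra. }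
  assert (Hcont : lin_growth (fun a k => E_nb (rz k) p (continuation a k))).
  { destruct continuation_growth as (A & B & HA & HB & Hc).
    apply (E_lin_growth_state p Hp r0 1 rz _ A B Hr0 HA HB Hrz1).
    intros a k n. destruct (Hc a k n). rewrite Rabs_pos_eq; lra. }
  destruct (lin_growth_plus _ _ (lin_growth_plus _ _ (lin_growth_scal ch _ Hch Hhold)
                                   (lin_growth_scal cb _ Hcb Hback)) Hcont)
    as (A & B & HA & HB & Hg).
  exists A, B. split; [exact HA | split; [exact HB|]].
  intros a k. specialize (Hg a k). simpl in Hg. unfold G. lra.
Qed.

Lemma V_bounds (x : Z) (k : nat) : 0 <= V x k <= G x k - cv * IZR x.
Proof.
  unfold V. refine (proj2 (inf_ge_spec x (fun a => G a k - cv * IZR x) 0 _)).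
  intros a Ha. pose proof (G_lower a k). apply IZR_le in Ha. nra.
Qed.

Lemma V_eq (x : Z) (k : nat) : V x k = inf_ge x (fun a => G a k) - cv * IZR x.
Proof.
  unfold V. rewrite (inf_ge_ext x _ (fun a => G a k + - (cv * IZR x))) by (intros; ring).
  rewrite (inf_ge_shift _ _ _ (cv * IZR x)); [ring|].
  intros a Ha. pose proof (G_lower a k). apply IZR_le in Ha. nra.
Qed.

Lemma V_increment (x : Z) (k : nat) :
  V (x + 1)%Z k - V x k = Rmax (G (x + 1)%Z k - G x k) 0 - cv.
Proof.
  rewrite !V_eq, plus_IZR.
  pose proof (inf_ge_increment x (fun a => G a k) (G_convex k)) as Hinc. simpl in Hinc. lra.
Qed.

Lemma V_shape : value_shape cv V.
Proof.
  split.
  - intros x k; apply V_bounds.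
  - destruct G_growth as (A & B & HA & HB & Hg). exists A, B.
    split; [exact HA | split; [exact HB|]].
    intros x k. destruct (V_bounds x k). specialize (Hg x k). lra.
  - intros k x. cbv beta. rewrite V_increment. replace (x + 1 + 1)%Z with ((x + 1) + 1)%Z by lia.
    rewrite V_increment. apply Rplus_le_compat_r, Rle_max_compat_r, G_convex.
  - intros x k1 k2 Hk. rewrite !V_increment.
    apply Rplus_le_compat_r, Rle_max_compat_r, G_increment_antitone_k, Hk.
  - intros x k. rewrite V_increment. pose proof (Rmax_r (G (x + 1)%Z k - G x k) 0). lra.
Qed.

End OneStep.

Section SpareParts.
Variables (N T : nat) (alpha0 beta0 : R) (cv ch cb : nat -> R) (i : nat).
Hypotheses (HN : (1 <= N)%nat) (Halpha0 : 0 < alpha0) (Hbeta0 : 0 < beta0)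
  (Hcv : 0 < cv i) (Hch : 0 < ch i) (Hcb : 0 < cb i).

Lemma p_t_range (t : nat) : 0 < p_t N beta0 t < 1.
Proof.
  unfold p_t. pose proof (pos_INR N); pose proof (pos_INR t).
  assert (0 <= INR N * INR t) by (apply Rmult_le_pos; assumption).
  split.
  - apply Rdiv_lt_0_compat; lra.
  - apply (Rmult_lt_reg_r (beta0 + INR N * INR t + 1)); [lra|].
    unfold Rdiv. rewrite Rmult_assoc, Rinv_l by lra. lra.
Qed.

Lemma rK_linear (k : nat) : rK N alpha0 k = (INR N - 1) * alpha0 + INR ((N - 1) * k).
Proof. unfold rK. rewrite mult_INR, minus_INR by exact HN. simpl. ring. Qed.

Lemma rK_base_nonneg : 0 <= (INR N - 1) * alpha0.
Proof. apply Rmult_le_pos; [apply le_INR in HN; simpl in HN; lra | lra]. Qed.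

Lemma Vaux_succ (m s : nat) (x : Z) (k : nat) :
  Vaux N alpha0 beta0 cv ch cb i (S m) s x k
  = V (p_t N beta0 s) (cv i) (ch i) (cb i) (rZ alpha0) (rK N alpha0)
      (Vaux N alpha0 beta0 cv ch cb i m (S s)) x k.
Proof.
  simpl. unfold V. apply inf_ge_ext. intros a.
  unfold Ccost, G, continuation. rewrite E_nb2_iterated, minus_IZR. ring.
Qed.

Lemma Vaux_shape (m s : nat) : value_shape (cv i) (Vaux N alpha0 beta0 cv ch cb i m s).
Proof.
  revert s; induction m as [|m IH]; intros s.
  - apply zero_shape; lra.
  - apply (value_shape_ext _ _ _ (fun x k => eq_sym (Vaux_succ m s x k))).
    apply (V_shape _ _ _ _ alpha0 ((INR N - 1) * alpha0) (N - 1)).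
    + apply p_t_range.
    + lra.
    + lra.
    + lra.
    + lra.
    + apply rK_base_nonneg.
    + intros k; reflexivity.
    + apply rK_linear.
    + apply IH.
Qed.

Lemma Vt_shape (t : nat) : value_shape (cv i) (Vt N T alpha0 beta0 cv ch cb i t).
Proof. apply Vaux_shape. Qed.

(** [Gt] is the cost-to-go [G] of the epoch built on [Vt (t+1)]. *)
Lemma Gt_increment_antitone (t : nat) (a : Z) (k1 k2 : nat) : (k1 <= k2)%nat ->
  Gt N T alpha0 beta0 cv ch cb i t (a + 1)%Z k2 - Gt N T alpha0 beta0 cv ch cb i t a k2
  <= Gt N T alpha0 beta0 cv ch cb i t (a + 1)%Z k1 - Gt N T alpha0 beta0 cv ch cb i t a k1.
Proof.
  apply (G_increment_antitone_k (p_t N beta0 t) (cv i) (ch i) (cb i) alpha0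
           ((INR N - 1) * alpha0) (N - 1) (rZ alpha0) (rK N alpha0)
           (Vt N T alpha0 beta0 cv ch cb i (S t))).
  - apply p_t_range.
  - lra.
  - lra.
  - lra.
  - apply rK_base_nonneg.
  - intros k; reflexivity.
  - apply rK_linear.
  - apply Vt_shape.
Qed.

End SpareParts.

Theorem proposition6 (N T : nat) (alpha0 beta0 : R) (cv ch cb : nat -> R) :
  (1 <= N)%nat -> (1 <= T)%nat -> 0 < alpha0 -> 0 < beta0 ->
  (forall i, (1 <= i <= N)%nat ->
     0 < cv i /\ 0 < ch i /\ 0 < cb i /\ cv i < cb i) ->
  forall t i, (t < T)%nat -> (1 <= i <= N)%nat ->
    (forall (a : Z) (k1 k2 : nat), (k1 <= k2)%nat ->
       Gt N T alpha0 beta0 cv ch cb i t (a + 1)%Z k2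
         - Gt N T alpha0 beta0 cv ch cb i t a k2
       <= Gt N T alpha0 beta0 cv ch cb i t (a + 1)%Z k1
         - Gt N T alpha0 beta0 cv ch cb i t a k1) /\
    (forall (x : Z) (k1 k2 : nat), (k1 <= k2)%nat ->
       Vt N T alpha0 beta0 cv ch cb i t (x + 1)%Z k2
         - Vt N T alpha0 beta0 cv ch cb i t x k2
       <= Vt N T alpha0 beta0 cv ch cb i t (x + 1)%Z k1
         - Vt N T alpha0 beta0 cv ch cb i t x k1).
Proof.
  intros HN _ Halpha0 Hbeta0 Hcosts t i _ Hi.
  destruct (Hcosts i Hi) as (Hcv & Hch & Hcb & _).
  split.
  - intros a k1 k2 Hk. apply Gt_increment_antitone; assumption.
  - intros x k1 k2 Hk. apply (shape_antitone _ _ (Vt_shape N T alpha0 beta0 cv ch cb i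
                                                     HN Halpha0 Hbeta0 Hcv Hch Hcb t)), Hk.
Qed.
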